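(* Let $m\ge1$ and $B_{m,p}=\frac{1}{p+2}\binom{2p+2}{p+1}m^{p+1}$. Then $$\mathbf N^{\mathcal B}_m(z)=\frac{1}{2mz^2}\sum_{p\ge0}B_{m,p}\left(\sqrt{1-4mz+4mz^{p+2}}-\sqrt{1-4mz}\right)$$ and $$\mathbf E^{\mathcal B}_m(z)=\frac{3}{2mz^2}\sum_{p\ge1}\frac{p}{2p+1}B_{m,p}\left(\sqrt{1-4mz+4mz^{p+2}}-\sqrt{1-4mz}\right).$$
   Context: An $m$-labeled binary tree is a non-empty finite rooted tree with node labels in $\{1,\dots,m\}$ in which every node has an optional left and an optional right child (distinguished); its size is its number of edges; $\mathcal B_{m,n}$ is the set of such trees of size $n$ (so $|\mathcal B_{m,p}|=B_{m,p}$). For such a tree $t$, its minimal dag has as nodes the distinct subtrees of $t$ (subtree = a node with all its descendants) and an edge from the node of a subtree to the node of each of its non-empty left/right subtrees; $\|\mathrm{dag}(t)\|$ is the number of distinct subtrees of $t$ and $|\mathrm{dag}(t)|$ is the sum over distinct subtrees of $t$ of the number of children of their root. Define $\mathbf N^{\mathcal B}_m(z)=\sum_{n\ge0}\big(\sum_{t\in\mathcal B_{m,n}}\|\mathrm{dag}(t)\|\big)z^n$ and $\mathbf E^{\mathcal B}_m(z)=\sum_{n\ge0}\big(\sum_{t\in\mathcal B_{m,n}}|\mathrm{dag}(t)|\big)z^n$. *)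

From HB Require Import structures.
From mathcomp Require Import all_boot all_order all_algebra.
Set Implicit Arguments. Unset Strict Implicit. Unset Printing Implicit Defensive.
Import Order.TTheory GRing.Theory Num.Theory.

(* Binary trees: [BLeaf] is the empty tree (absent child); an m-labeled binary
   tree is a tree [BNode a l r] (non-empty) all of whose labels lie in {1..m}. *)
Inductive bt := BLeaf | BNode of nat & bt & bt.

Lemma bt_eq_dec : forall x y : bt, {x = y} + {x <> y}.
Proof. decide equality; exact: (fun a b : nat => decP (@eqP _ a b)). Qed.

HB.instance Definition _ := comparableMixin bt_eq_dec.

Fixpoint labels_ok (m : nat) (t : bt) : bool :=
  match t with
  | BLeaf => true
  | BNode a l r => [&& 1 <= a <= m, labels_ok m l & labels_ok m r]
  end.

Definition is_mtree (m : nat) (t : bt) : bool := (t != BLeaf) && labels_ok m t.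

Fixpoint nnodes (t : bt) : nat :=
  match t with BLeaf => 0 | BNode _ l r => (nnodes l + nnodes r).+1 end.

(* size = number of edges = number of nodes - 1 (for non-empty trees) *)
Definition bsize (t : bt) : nat := (nnodes t).-1.

Fixpoint subtrees (t : bt) : seq bt :=
  match t with BLeaf => [::] | BNode _ l r => t :: (subtrees l ++ subtrees r) end.

Definition nchildren (t : bt) : nat :=
  match t with BLeaf => 0 | BNode _ l r => (l != BLeaf) + (r != BLeaf) end.

Definition dag_nodes (t : bt) : nat := size (undup (subtrees t)).
Definition dag_edges (t : bt) : nat := \sum_(u <- undup (subtrees t)) nchildren u.

Local Open Scope ring_scope.

Definition fps := nat -> rat.
Definition fmul (f g : fps) : fps := fun n => \sum_(i < n.+1) f i * g (n - i)%N.

(* coefficients of 1 - 4 m z + 4 m z^(p+2) *)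
Definition Qp (m p : nat) : fps := fun k =>
  (k == 0)%:R - 4 * m%:R * (k == 1)%:R + 4 * m%:R * (k == p.+2)%:R.
(* coefficients of 1 - 4 m z *)
Definition Q0 (m : nat) : fps := fun k => (k == 0)%:R - 4 * m%:R * (k == 1)%:R.

Definition Bmp (m p : nat) : rat :=
  'C(p.*2.+2, p.+1)%:R / p.+2%:R * m%:R ^+ p.+1.

From HB Require Import structures.
From mathcomp Require Import all_boot all_order all_algebra.
From mathcomp Require Import ring lra zify.
Set Implicit Arguments. Unset Strict Implicit. Unset Printing Implicit Defensive.
Import Order.TTheory GRing.Theory Num.Theory.
Local Open Scope ring_scope.

(* Fix a tree u with p+1 nodes and let A_u(z) count, by number of nodes, the
   m-labeled trees (the empty one included) in which u does not occur as a
   subtree.  Splitting a tree at its root gives A_u = 1 + m z A_u^2 - z^(p+1),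
   i.e. (1 - 2 m z A_u)^2 = 1 - 4 m z + 4 m z^(p+2): the series 1 - 2 m z A_u is
   the square root S_p, and for u empty it is T.  Hence the number of trees of
   size n containing u is [z^(n+2)] (S_p - T) / (2 m), independently of u.
   Counting each distinct subtree of each tree once amounts to summing this over
   all trees u with p+1 nodes, weighted by 1 for ||dag|| and by the number of
   children of the root of u for |dag|; there are B_{m,p} such trees u (their
   generating function is the Catalan one), and their roots have
   3p/(2p+1) B_{m,p} children in total. *)

Lemma sum_eq_indicator (T : eqType) (R : pzSemiRingType) (s : seq T) x :
  uniq s -> \sum_(y <- s) (y == x)%:R = (x \in s)%:R :> R.
Proof.
move=> s_uniq; rewrite -count_uniq_mem // -sum1_count natr_sum [RHS]big_mkcond.
by apply: eq_bigr => y _ /=; case: eqP.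
Qed.

Lemma big_partition_nat (T : Type) (R : nmodType) (s : seq T) (f : T -> nat) k
    (G : T -> R) :
  \sum_(x <- s | (f x <= k)%N) G x = \sum_(i < k.+1) \sum_(x <- s | f x == i) G x.
Proof.
rewrite [RHS](exchange_big_dep predT) //= big_mkcond; apply: eq_bigr => x _.
rewrite (eq_bigl (fun i : 'I_k.+1 => i == f x :> nat)); last by move=> i; rewrite eq_sym.
by rewrite (big_ord1_eq _ (fun=> G x)) ltnS.
Qed.

Lemma big_pairs_partition (T : Type) (R : nmodType) (s : seq T) (f : T -> nat) k
    (G : T -> T -> R) :
  \sum_(x <- s) \sum_(y <- s | (f x + f y)%N == k) G x y =
  \sum_(i < k.+1) \sum_(x <- s | f x == i) \sum_(y <- s | f y == (k - i)%N) G x y.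
Proof.
rewrite [RHS](exchange_big_dep predT) //=; apply: eq_bigr => x _.
rewrite (eq_bigl (fun i : 'I_k.+1 => i == f x :> nat)); last by move=> i; rewrite eq_sym.
rewrite (big_ord1_eq _ (fun i => \sum_(y <- s | f y == (k - i)%N) G x y)) ltnS.
case: leqP => [le_xk|lt_kx].
  by apply: eq_bigl => y; rewrite -(eqn_add2l (f x) (f y)) subnKC.
by rewrite big_mkcond big1 // => y _; rewrite gtn_eqF // ltn_addr.
Qed.

Lemma fmul_sqrS (f : fps) k :
  fmul f f k.+1 = 2 * f 0%N * f k.+1 + \sum_(i < k) f i.+1 * f (k - i)%N.
Proof.
rewrite /fmul big_ord_recl big_ord_recr /= subn0 subnn.
under eq_bigr => i _ do rewrite /bump /= add1n subSS.
rewrite (mulrC (f k.+1)); ring.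
Qed.

Lemma fps_sqrt_uniq (f g : fps) : f 0%N = 1 -> g 0%N = 1 ->
  (forall k, fmul f f k = fmul g g k) -> forall k, f k = g k.
Proof.
move=> f0 g0 fg k; elim/ltn_ind: k => -[|k] IH; first by rewrite f0 g0.
have low : \sum_(i < k) f i.+1 * f (k - i)%N = \sum_(i < k) g i.+1 * g (k - i)%N.
  by apply: eq_bigr => i _; rewrite !IH // ltnS ?leq_subr.
move: (fg k.+1); rewrite !fmul_sqrS low f0 g0 => h; lra.
Qed.

Section VanishingCoefficients.

Variable R : nzRingType.

Definition lowzero n (p : {poly R}) := forall j, (j < n)%N -> p`_j = 0.

Lemma lowzeroW n p : lowzero n.+1 p -> lowzero n p.
Proof. by move=> hp j hj; rewrite hp // ltnW. Qed.

Lemma lowzeroD n p q : lowzero n p -> lowzero n q -> lowzero n (p + q).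
Proof. by move=> hp hq j hj; rewrite coefD hp ?hq ?addr0. Qed.

Lemma lowzeroN n p : lowzero n p -> lowzero n (- p).
Proof. by move=> hp j hj; rewrite coefN hp ?oppr0. Qed.

Lemma lowzeroMn n p k : lowzero n p -> lowzero n (p *+ k).
Proof. by move=> hp j hj; rewrite coefMn hp ?mul0rn. Qed.

Lemma lowzeroMr n p q : lowzero n p -> lowzero n (p * q).
Proof.
move=> hp j hj; rewrite coefM big1 // => i _; rewrite hp ?mul0r //.
by apply: leq_ltn_trans hj; rewrite -ltnS.
Qed.

Lemma lowzeroMl n p q : lowzero n q -> lowzero n (p * q).
Proof.
move=> hq j hj; rewrite coefMr big1 // => i _; rewrite hq ?mulr0 //.
by apply: leq_ltn_trans hj; rewrite -ltnS.
Qed.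

Lemma lowzeroX n p : lowzero n p -> lowzero n.+1 ('X * p).
Proof. by move=> hp [|j] hj; rewrite coefXM //= hp. Qed.

Lemma lowzero_deriv n p : lowzero n.+1 p -> lowzero n p^`().
Proof. by move=> hp j hj; rewrite coef_deriv hp ?mul0rn. Qed.

End VanishingCoefficients.

Lemma deriv_sqr_relation (R : comNzRingType) (T Q D : {poly R}) :
  T * T = Q - D ->
  (Q * T^`()) *+ 2 - T * Q^`() = (D * T^`()) *+ 2 - T * D^`().
Proof.
move=> TTQ; have dTTQ : (T * T^`()) *+ 2 = Q^`() - D^`().
  by rewrite -derivB -TTQ derivM mulrC mulr2n.
have -> : Q^`() = (T * T^`()) *+ 2 + D^`() by rewrite dTTQ subrK.
have -> : Q = T * T + D by rewrite TTQ subrK.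
ring.
Qed.

Lemma catalan_poly_lowzero (R : comNzRingType) (b : nat -> R) (M : R) N :
  b 0%N = 1 -> (forall k, b k.+1 = M * \sum_(i < k.+1) b i * b (k - i)%N) ->
  let P := \poly_(i < N) b i in lowzero N (P - 1 - M%:P * ('X * (P * P))).
Proof.
move=> b0 brec P; have coefP j : (j < N)%N -> P`_j = b j by rewrite coef_poly => ->.
move=> [|j] hj; rewrite !coefB coef1 coefCM coefXM /=.
  by rewrite coefP // b0 subrr mulr0 subr0.
rewrite coefP // brec coefM; apply/eqP; rewrite subr0 subr_eq0; apply/eqP.
congr (_ * _); apply: eq_bigr => i _; rewrite !coefP //.
  by apply: leq_ltn_trans hj; rewrite ltnW // ltnS leq_subr.
by apply: leq_ltn_trans hj; rewrite ltnW // ltn_ord.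
Qed.

(* T := 1 - 2 M z B(z) satisfies T^2 = 1 - 4 M z up to order N, so by
   [deriv_sqr_relation] 2 (1 - 4 M z) T' = -4 M T up to order N - 1; the
   coefficient of z^(k+1) of this identity is the ratio. *)
Lemma catalan_ratio (b : nat -> rat) (M : rat) : b 0%N = 1 ->
  (forall k, b k.+1 = M * \sum_(i < k.+1) b i * b (k - i)%N) ->
  forall k, (k.+2)%:R * b k.+1 = 2 * (k.*2.+1)%:R * M * b k.
Proof.
move=> b0 brec k; have [M_0|M0] := eqVneq M 0.
  by rewrite brec M_0 mul0r !mulr0 mul0r.
pose N := k.+2; pose P : {poly rat} := \poly_(i < N) b i; pose c := M%:P.
have coefP j : (j < N)%N -> P`_j = b j by rewrite coef_poly => ->.
pose E := P - 1 - c * ('X * (P * P)).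
have lowE : lowzero N E := catalan_poly_lowzero b0 brec.
pose T := 1 - (c * ('X * P)) *+ 2; pose Q := 1 - (c * 'X) *+ 4.
pose D := ('X * (c * E)) *+ 4.
have lowD : lowzero N.+1 D by apply/lowzeroMn/lowzeroX/lowzeroMl.
have low_rhs : lowzero N ((D * T^`()) *+ 2 - T * D^`()).
  apply: lowzeroD; first by apply/lowzeroMn/lowzeroW/lowzeroMr.
  by apply/lowzeroN/lowzeroMl/lowzero_deriv.
have := low_rhs k.+1 (ltnSn _).
rewrite -(@deriv_sqr_relation _ T Q D); last by rewrite /T /Q /D /E; ring.
have dQ : Q^`() = - (c *+ 4).
  by rewrite /Q derivB derivMn derivM derivX mulr1 /c !derivC mul0r; ring.
have coefT j : (j < N)%N -> T`_j.+1 = -(2 * M) * b j.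
  move=> hj; rewrite /T coefB coef1 coefMn coefCM coefXM /= coefP //.
  by rewrite sub0r -mulr_natr; ring.
have -> : Q * T^`() *+ 2 - T * Q^`() =
    (T^`() - (c * ('X * T^`())) *+ 4) *+ 2 + (T * c) *+ 4.
  by rewrite dQ /Q; ring.
rewrite coefD !coefMn coefB coefMn coefCM coefXM /= coefMC !coef_deriv.
rewrite !coefT // => coef_eq0.
have : - (4 * M) * ((k.+2)%:R * b k.+1 - 2 * (k.*2.+1)%:R * M * b k) = 0.
  by rewrite -coef_eq0 -muln2; ring.
move/eqP; rewrite mulf_eq0 oppr_eq0 mulf_eq0 (negbTE M0) orbF subr_eq0.
by case/orP => /eqP.
Qed.

Lemma central_binS p :
  ('C(p.*2.+4, p.+2) * p.+2 = 2 * p.*2.+3 * 'C(p.*2.+2, p.+1))%N.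
Proof.
have diag := mul_bin_diag p.*2.+4 p.+1; have down := mul_bin_down p.*2.+3 p.+1.
have sub : (p.*2.+3 - p.+1 = p.+2)%N by rewrite -addnn; lia.
rewrite /= sub in diag down; nia.
Qed.

Lemma Bmp_ratio m p : (p.+3)%:R * Bmp m p.+1 = 2 * (p.*2.+3)%:R * m%:R * Bmp m p.
Proof.
rewrite /Bmp -[(p.+1).*2.+2]/(p.*2.+4).
have p2_neq0 : (p.+2)%:R != 0 :> rat by rewrite pnatr_eq0.
have -> : 'C(p.*2.+4, p.+2)%:R = 2 * (p.*2.+3)%:R * 'C(p.*2.+2, p.+1)%:R / (p.+2)%:R :> rat.
  by rewrite -!natrM -central_binS natrM mulfK.
by rewrite exprS; field; rewrite -!natrD !pnatr_eq0.
Qed.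

Fixpoint height (t : bt) : nat :=
  if t is BNode _ l r then (maxn (height l) (height r)).+1 else 0.

Lemma height_le_nnodes t : (height t <= nnodes t)%N.
Proof.
elim: t => //= a l IHl r IHr; rewrite ltnS geq_max.
by rewrite (leq_trans IHl) ?(leq_trans IHr) ?leq_addl ?leq_addr.
Qed.

Lemma node_neq_leaf a l r : (BNode a l r == BLeaf) = false.
Proof. by apply/eqP. Qed.

Section LabeledTrees.

Variable m : nat.

(* Enumerating by height rather than by size keeps the recursion structural. *)
Fixpoint trees_le (d : nat) : seq bt :=
  if d is d'.+1 then
    BLeaf :: [seq BNode a lr.1 lr.2 | a <- iota 1 m,
                lr <- [seq (l, r) | l <- trees_le d', r <- trees_le d']]
  else [:: BLeaf].

Lemma mem_trees_le d t : (t \in trees_le d) = labels_ok m t && (height t <= d)%N.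
Proof.
elim: d t => [|d IH] [|a l r] //=;
  rewrite in_cons ?eqxx ?node_neq_leaf ?in_nil ?ltn0 ?andbF //=.
apply/allpairsP/idP => [[[a' [l' r']]] /= [+ + [-> -> ->]]|].
  rewrite mem_iota => /andP [a_ge1 a_lem] /allpairsP [[l2 r2]] /= [+ + [-> ->]].
  rewrite !IH ltnS geq_max => /andP [-> ->] /andP [-> ->].
  by rewrite a_ge1 -ltnS -add1n a_lem.
rewrite ltnS geq_max => /andP [/and3P [a_m l_ok r_ok] /andP [hl hr]].
exists (a, (l, r)); split => //=; first by rewrite mem_iota add1n ltnS.
by apply/allpairsP; exists (l, r); rewrite /= !IH l_ok r_ok hl hr.
Qed.

Lemma trees_le_uniq d : uniq (trees_le d).
Proof.
elim: d => //= d IH; apply/andP; split.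
  by apply/negP => /allpairsP [[? ?]] [].
apply: allpairs_uniq; rewrite ?iota_uniq //.
  by apply: allpairs_uniq => // -[? ?] [? ?] _ _ /= [-> ->].
by move=> [? [? ?]] [? [? ?]] _ _ /= [-> -> ->].
Qed.

Definition trees (k : nat) : seq bt := [seq t <- trees_le k | nnodes t == k].

Lemma mem_trees k t : (t \in trees k) = labels_ok m t && (nnodes t == k).
Proof.
rewrite mem_filter mem_trees_le; case: eqP => [<-|] /=; last by rewrite andbF.
by rewrite height_le_nnodes andbT.
Qed.

Lemma trees_uniq k : uniq (trees k).
Proof. by rewrite filter_uniq ?trees_le_uniq. Qed.

Lemma big_trees_eq (s : seq bt) k (F : bt -> rat) :
  uniq s -> s =i trees k -> \sum_(t <- s) F t = \sum_(t <- trees k) F t.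
Proof. by move=> s_uniq s_eq; apply/perm_big/uniq_perm; rewrite ?trees_uniq. Qed.

Lemma big_trees_le d k (F : bt -> rat) : (k <= d)%N ->
  \sum_(t <- trees_le d | nnodes t == k) F t = \sum_(t <- trees k) F t.
Proof.
move=> le_kd; rewrite -big_filter.
apply: big_trees_eq; first by rewrite filter_uniq ?trees_le_uniq.
move=> t; rewrite mem_filter mem_trees_le mem_trees.
case: eqP => [ht|] /=; last by rewrite andbF.
by rewrite (leq_trans (height_le_nnodes t)) ?ht ?andbT.
Qed.

Lemma big_trees_node k (F : bt -> rat) :
  \sum_(t <- trees k.+1) F t =
  \sum_(1 <= a < m.+1) \sum_(i < k.+1)
     \sum_(l <- trees i) \sum_(r <- trees (k - i)) F (BNode a l r).
Proof.
rewrite big_filter /= big_cons /= big_mkcond big_allpairs_dep.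
rewrite /index_iota subSS subn0; apply: eq_bigr => a _.
rewrite big_allpairs_dep /=.
under eq_bigr do rewrite -big_mkcond /=.
under eq_bigr do under eq_bigl do rewrite eqSS.
rewrite (big_pairs_partition _ nnodes _ (fun l r => F (BNode a l r))).
apply: eq_bigr => i _.
rewrite (@big_trees_le k i _ (ltn_ord i)).
by apply: eq_bigr => l _; rewrite (@big_trees_le k (k - i)) ?leq_subr.
Qed.

Lemma nnodes_subtree u t : u \in subtrees t -> (0 < nnodes u <= nnodes t)%N.
Proof.
elim: t => //= a l IHl r IHr; rewrite in_cons mem_cat => /or3P [/eqP -> /=| /IHl | /IHr].
- by rewrite leqnn.
- by case/andP=> -> /leq_trans; apply; rewrite ltnW // ltnS leq_addr.
- by case/andP=> -> /leq_trans; apply; rewrite ltnW // ltnS leq_addl.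
Qed.

Lemma labels_ok_subtree u t : u \in subtrees t -> labels_ok m t -> labels_ok m u.
Proof.
elim: t => //= a l IHl r IHr; rewrite in_cons mem_cat.
by case/or3P => [/eqP -> // | /IHl + /and3P [] | /IHr + /and3P []]; auto.
Qed.

Lemma leaf_notin_subtrees t : BLeaf \notin subtrees t.
Proof. by apply/negP => /nnodes_subtree. Qed.

Lemma node_notin_subtrees_children a l r :
  (BNode a l r \notin subtrees l) && (BNode a l r \notin subtrees r).
Proof.
have small u : (nnodes u < nnodes (BNode a l r))%N -> BNode a l r \notin subtrees u.
  by move=> lt_u; apply/negP => /nnodes_subtree /andP [_]; rewrite leqNgt lt_u.
by rewrite !small // ltnS ?leq_addl ?leq_addr.
Qed.

Definition ntrees k : rat := (size (trees k))%:R.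

Lemma ntreesE k : ntrees k = \sum_(t <- trees k) 1.
Proof. by rewrite /ntrees -sum1_size natr_sum. Qed.

Definition avoiding u k : rat := \sum_(t <- trees k) (u \notin subtrees t)%:R.

Definition containing u k : rat := \sum_(t <- trees k) (u \in subtrees t)%:R.

Lemma avoiding_leaf k : avoiding BLeaf k = ntrees k.
Proof.
by rewrite ntreesE; apply: eq_bigr => t _; rewrite leaf_notin_subtrees.
Qed.

Lemma containingE u k : containing u k = ntrees k - avoiding u k.
Proof.
rewrite /containing -avoiding_leaf -sumrB; apply: eq_bigr => t _.
by rewrite leaf_notin_subtrees; case: (u \in subtrees t); rewrite ?subrr ?subr0.
Qed.

Lemma avoiding0 u : avoiding u 0 = 1.
Proof. by rewrite /avoiding /trees /= big_cons big_nil addr0. Qed.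

Lemma avoiding_rec u k : labels_ok m u ->
  avoiding u k.+1 =
  m%:R * \sum_(i < k.+1) avoiding u i * avoiding u (k - i) - (nnodes u == k.+1)%:R.
Proof.
move=> u_ok; rewrite /avoiding.
have split_node t : t \in trees k.+1 -> (u \notin subtrees t)%:R =
    (if t is BNode _ l r then (u \notin subtrees l)%:R * (u \notin subtrees r)%:R else 0)
    - (t == u)%:R :> rat.
  case: t => [|a l r]; first by rewrite mem_trees andbF.
  rewrite /= in_cons mem_cat negb_or => _; case: (eqVneq u (BNode a l r)) => [->|_] /=.
    by case/andP: (node_notin_subtrees_children a l r) => -> ->; rewrite mulr1 subrr.
  by case: (u \in subtrees l); case: (u \in subtrees r); rewrite /= ?mul1r ?mul0r ?subr0.
rewrite big_seq (eq_bigr _ split_node) -big_seq sumrB sum_eq_indicator ?trees_uniq //.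
rewrite mem_trees u_ok big_trees_node sumr_const_nat subn1 /= mulr_natl.
congr (_ *+ _ - _); apply: eq_bigr => i _; rewrite mulr_suml.
by apply: eq_bigr => l _; rewrite mulr_sumr.
Qed.

Lemma ntrees0 : ntrees 0 = 1.
Proof. by rewrite -avoiding_leaf avoiding0. Qed.

Lemma ntrees_rec k : ntrees k.+1 = m%:R * \sum_(i < k.+1) ntrees i * ntrees (k - i).
Proof.
rewrite -avoiding_leaf avoiding_rec // subr0.
by under eq_bigr do rewrite !avoiding_leaf.
Qed.

Lemma sum_nonleaf_trees k :
  \sum_(t <- trees k) (t != BLeaf)%:R = (k != 0%N)%:R * ntrees k.
Proof.
case: k => [|k]; first by rewrite /trees /= big_cons big_nil eqxx /= mul0r addr0.
rewrite /= mul1r ntreesE big_seq [RHS]big_seq.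
by apply: eq_bigr => -[|a l r]; rewrite mem_trees ?node_neq_leaf.
Qed.

Lemma sum_nchildren_trees k :
  \sum_(t <- trees k.+1) (nchildren t)%:R = 2 * ntrees k.+1 - 2 * m%:R * ntrees k.
Proof.
have split_children i : \sum_(l <- trees i) \sum_(r <- trees (k - i))
      ((l != BLeaf) + (r != BLeaf))%N%:R
    = ((i != 0%N)%:R + ((k - i)%N != 0%N)%:R) * (ntrees i * ntrees (k - i)).
  transitivity (\sum_(l <- trees i) (l != BLeaf)%:R * \sum_(r <- trees (k - i)) 1
                + \sum_(l <- trees i) 1 * \sum_(r <- trees (k - i)) (r != BLeaf)%:R : rat).
    rewrite -big_split; apply: eq_bigr => l _.
    by rewrite !mulr_sumr -big_split; apply: eq_bigr => r _; rewrite natrD !mulr1 !mul1r.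
  by rewrite -!mulr_suml !sum_nonleaf_trees -!ntreesE; ring.
rewrite big_trees_node /=.
rewrite sumr_const_nat subn1 /=; under eq_bigr do rewrite split_children mulrDl.
rewrite big_split /= ntrees_rec.
set X := fun i : nat => ntrees i * ntrees (k - i).
have drop_first : \sum_(i < k.+1) ((i : nat) != 0%N)%:R * X i = \sum_(i < k.+1) X i - X 0%N.
  rewrite !big_ord_recl /= mul0r add0r addrAC subrr add0r.
  by under eq_bigr do rewrite mul1r.
have drop_last : \sum_(i < k.+1) ((k - i)%N != 0%N)%:R * X i = \sum_(i < k.+1) X i - X k.
  rewrite !big_ord_recr /= subnn mul0r addr0 addrK; apply: eq_bigr => i _.
  by rewrite subn_eq0 leqNgt ltn_ord mul1r.
rewrite drop_first drop_last /X subn0 subnn ntrees0 mulr1 mul1r; ring.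
Qed.

Lemma sum_undup_subtrees k t (F : bt -> rat) : t \in trees k ->
  \sum_(u <- undup (subtrees t)) F u =
  \sum_(p < k) \sum_(u <- trees p.+1) (u \in subtrees t)%:R * F u.
Proof.
rewrite mem_trees => /andP [t_ok /eqP t_k].
have G_leaf : \sum_(u <- trees 0) (u \in subtrees t)%:R * F u = 0.
  by rewrite /trees /= big_cons big_nil (negbTE (leaf_notin_subtrees t)) mul0r addr0.
have -> : \sum_(p < k) \sum_(u <- trees p.+1) (u \in subtrees t)%:R * F u =
           \sum_(i < k.+1) \sum_(u <- trees i) (u \in subtrees t)%:R * F u.
  by rewrite big_ord_recl G_leaf add0r.
under [RHS]eq_bigr => i _ do rewrite -(@big_trees_le k i _ (ltn_ord i)).
rewrite -big_partition_nat.
have sub_small u : u \in subtrees t -> (nnodes u <= k)%N.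
  by move=> /nnodes_subtree /andP [_]; rewrite t_k.
transitivity (\sum_(u <- trees_le k | u \in subtrees t) F u).
  rewrite -[RHS]big_filter; apply/perm_big/uniq_perm;
    rewrite ?undup_uniq ?filter_uniq ?trees_le_uniq //.
  move=> u; rewrite mem_undup mem_filter mem_trees_le andbC.
  case: (boolP (u \in subtrees t)) => u_t; rewrite ?andbF ?andbT //.
  by rewrite (labels_ok_subtree u_t t_ok) (leq_trans (height_le_nnodes u)) ?sub_small.
rewrite big_mkcond [RHS]big_mkcond; apply: eq_bigr => u _.
case: (boolP (u \in subtrees t)) => u_t; last by rewrite mul0r if_same.
by rewrite sub_small // mul1r.
Qed.

Lemma sum_dag_subtrees k (F : bt -> rat) :
  \sum_(t <- trees k) \sum_(u <- undup (subtrees t)) F u =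
  \sum_(p < k) \sum_(u <- trees p.+1) containing u k * F u.
Proof.
rewrite big_seq (eq_bigr _ (fun t t_k => sum_undup_subtrees F t_k)) -big_seq exchange_big.
apply: eq_bigr => p _; rewrite exchange_big; apply: eq_bigr => u _.
by rewrite mulr_suml.
Qed.

Definition avoid_series u : fps :=
  fun k => if k is k'.+1 then - (2 * m%:R) * avoiding u k' else 1.

Lemma avoid_series_sqr u k : labels_ok m u ->
  fmul (avoid_series u) (avoid_series u) k =
  Q0 m k + 4 * m%:R * ((k == (nnodes u).+1) && (1 < k)%N)%:R.
Proof.
move=> u_ok; case: k => [|[|k]].
- by rewrite /fmul big_ord1 /Q0 ltn0 andbF /=; ring.
- by rewrite fmul_sqrS big_ord0 /= avoiding0 /Q0 ltnn andbF /=; ring.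
rewrite fmul_sqrS /= avoiding_rec // /Q0 /= andbT eqSS eq_sym.
rewrite [X in _ + X = _](eq_bigr (fun i : 'I_k.+1 =>
    4 * m%:R ^+ 2 * (avoiding u i * avoiding u (k - i)))); last first.
  by move=> i _; rewrite subSn /=; [ring | rewrite -ltnS].
rewrite -mulr_sumr; ring.
Qed.

Lemma containing_series u k : m%:R != 0 :> rat ->
  containing u k = (avoid_series u k.+1 - avoid_series BLeaf k.+1) / (2 * m%:R).
Proof. by move=> m_neq0; rewrite containingE /= avoiding_leaf; field. Qed.

Lemma ntreesS p : ntrees p.+1 = Bmp m p.
Proof.
elim: p => [|p IH].
  by rewrite ntrees_rec big_ord1 ntrees0 /Bmp /= bin1 divff ?mulr1 ?mul1r.
have p3_neq0 : (p.+3)%:R != 0 :> rat by rewrite pnatr_eq0.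
apply: (mulfI p3_neq0); rewrite Bmp_ratio -IH.
exact: (catalan_ratio ntrees0 ntrees_rec p.+1).
Qed.

Lemma sum_nchildren_Bmp p :
  \sum_(t <- trees p.+1) (nchildren t)%:R = 3 * p%:R / (p.*2.+1)%:R * Bmp m p.
Proof.
have ratio := catalan_ratio ntrees0 ntrees_rec p; rewrite ntreesS in ratio.
have odd_neq0 : (p.*2.+1)%:R != 0 :> rat by rewrite pnatr_eq0.
rewrite sum_nchildren_trees ntreesS.
have -> : 2 * m%:R * ntrees p = (p.+2)%:R * Bmp m p / (p.*2.+1)%:R.
  by apply: (mulIf odd_neq0); rewrite mulfVK // ratio; ring.
rewrite -muln2 -addn1 -addn2 !natrD natrM in odd_neq0 *.
by field.
Qed.

Lemma avoid_series_sqrt_Qp u p (f : fps) : labels_ok m u -> nnodes u = p.+1 ->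
  f 0%N = 1 -> (forall k, fmul f f k = Qp m p k) -> forall k, f k = avoid_series u k.
Proof.
move=> u_ok u_p f0 f_sqr; apply: fps_sqrt_uniq => // k.
rewrite f_sqr avoid_series_sqr // u_p /Qp /Q0.
by have [->|_] := eqVneq k p.+2; rewrite ?ltnS ?ltn0Sn.
Qed.

Lemma avoid_series_sqrt_Q0 (f : fps) :
  f 0%N = 1 -> (forall k, fmul f f k = Q0 m k) -> forall k, f k = avoid_series BLeaf k.
Proof.
move=> f0 f_sqr; apply: fps_sqrt_uniq => // k; rewrite f_sqr avoid_series_sqr //=.
by have [->|_] := eqVneq k 1%N; rewrite ?ltnn /= mulr0 addr0.
Qed.

End LabeledTrees.

Theorem theorem5 (m : nat) (hm : (1 <= m)%N) (S : nat -> fps) (T : fps) :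
  (forall p, S p 0%N = 1) ->
  (forall p k, fmul (S p) (S p) k = Qp m p k) ->
  T 0%N = 1 ->
  (forall k, fmul T T k = Q0 m k) ->
  forall (n : nat) (s : seq bt),
    uniq s ->
    (forall t, (t \in s) = is_mtree m t && (bsize t == n)) ->
    (\sum_(t <- s) (dag_nodes t)%:R
       = (2 * m%:R)^-1 * \sum_(p < n.+1) Bmp m p * (S p n.+2 - T n.+2))
    /\
    (\sum_(t <- s) (dag_edges t)%:R
       = 3 / (2 * m%:R) *
         \sum_(1 <= p < n.+1) p%:R / (p.*2.+1)%:R * Bmp m p * (S p n.+2 - T n.+2)).
Proof.
(* [ring] and [field] fail while the binder [S] shadows [Datatypes.S]. *)
rename S into Sp; move=> Sp0 Sp_sqr T0 T_sqr n s s_uniq s_mem.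
have m_neq0 : m%:R != 0 :> rat by rewrite pnatr_eq0 -lt0n.
have sum_s (F : bt -> rat) : \sum_(t <- s) F t = \sum_(t <- trees m n.+1) F t.
  apply: big_trees_eq => // t; rewrite s_mem mem_trees /is_mtree /bsize.
  by case: t => [|a l r]; rewrite /= ?eqxx ?node_neq_leaf ?andbF.
have containing_n p u : u \in trees m p.+1 ->
    containing m u n.+1 = (Sp p n.+2 - T n.+2) / (2 * m%:R).
  rewrite mem_trees => /andP [u_ok /eqP u_p].
  by rewrite containing_series // (avoid_series_sqrt_Qp u_ok u_p (Sp0 p) (Sp_sqr p))
             (avoid_series_sqrt_Q0 T0 T_sqr).
have sum_dag (F : bt -> nat) : \sum_(t <- s) (\sum_(u <- undup (subtrees t)) F u)%:R =
    \sum_(p < n.+1) (Sp p n.+2 - T n.+2) / (2 * m%:R) * \sum_(u <- trees m p.+1) (F u)%:R.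
  rewrite sum_s; under eq_bigr do rewrite natr_sum; rewrite sum_dag_subtrees.
  apply: eq_bigr => p _; rewrite mulr_sumr big_seq [RHS]big_seq.
  by apply: eq_bigr => u u_p; rewrite (containing_n p).
split.
  under eq_bigr do rewrite /dag_nodes -sum1_size.
  rewrite sum_dag mulr_sumr; apply: eq_bigr => p _; under eq_bigr do rewrite mulr1n.
  by rewrite -ntreesE ntreesS; ring.
rewrite /dag_edges sum_dag big_ord_recl /= sum_nchildren_Bmp !mul0r mulr0 add0r.
rewrite big_add1 big_mkord /= mulr_sumr; apply: eq_bigr => p _.
rewrite /bump /= add1n sum_nchildren_Bmp; field.
by rewrite m_neq0 andbT addrC natr1 pnatr_eq0.
Qed.
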